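(* Consider the controlled system $\dot x = f(x)+g(x)u$, $y=h(x)$, with $x\in\mathbb{R}^{d_x}$, where $f,g,h$ are sufficiently many times differentiable, and let $\mathcal{S}\subset\mathbb{R}^{d_x}$ be open. Suppose that for some $j\in\{2,\dots,d_x\}$ the map $\mathbf{H}_j$ is an open map on $\mathcal{S}$. Then Property $\mathcal{B}(j)$ is satisfied.
   Context: $\mathbf{H}_i(x)=(h(x),L_fh(x),\dots,L_f^{i-1}h(x))\in\mathbb{R}^i$, where $L_f$ denotes the Lie derivative along $f$. Property $\mathcal{B}(j)$: for any $(x_a,x_b)\in\mathcal{S}^2$ with $x_a\ne x_b$ and $\mathbf{H}_j(x_a)=\mathbf{H}_j(x_b)$, there exists a sequence $(x_{a,k},x_{b,k})$ in $\mathcal{S}^2$ converging to $(x_a,x_b)$ such that for all $k$, $\mathbf{H}_j(x_{a,k})=\mathbf{H}_j(x_{b,k})$ and the Jacobian $\frac{\partial\mathbf{H}_{j-1}}{\partial x}$ has full rank (rank $j-1$) at $x_{a,k}$ or at $x_{b,k}$. *)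

From HB Require Import structures.
From mathcomp Require Import all_boot all_order all_algebra.
From mathcomp Require Import all_classical all_reals all_analysis.
Set Implicit Arguments. Unset Strict Implicit. Unset Printing Implicit Defensive.
Import Order.TTheory GRing.Theory Num.Theory.
Import numFieldNormedType.Exports.
Local Open Scope classical_set_scope.
Local Open Scope ring_scope.

Fixpoint Ck (R : realType) (n : nat) (V : normedModType R) (k : nat)
    (F : 'rV[R]_n -> V) : Prop :=
  match k with
  | 0 => continuous F
  | k'.+1 => (forall x, differentiable F x) /\
             (forall v : 'rV[R]_n, Ck k' (fun x => 'D_v F x))
  end.

Definition lie (R : realType) (n : nat) (f : 'rV[R]_n -> 'rV[R]_n)
    (phi : 'rV[R]_n -> R) : 'rV[R]_n -> R :=
  fun x => 'D_(f x) phi x.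

Definition lieN (R : realType) (n : nat) (f : 'rV[R]_n -> 'rV[R]_n)
    (h : 'rV[R]_n -> R) (k : nat) : 'rV[R]_n -> R :=
  iter k (lie f) h.

Definition Hmap (R : realType) (n : nat) (f : 'rV[R]_n -> 'rV[R]_n)
    (h : 'rV[R]_n -> R) (i : nat) (x : 'rV[R]_n) : 'rV[R]_i :=
  \row_(k < i) lieN f h k x.

Definition jacH (R : realType) (n : nat) (f : 'rV[R]_n -> 'rV[R]_n)
    (h : 'rV[R]_n -> R) (i : nat) (x : 'rV[R]_n) : 'M[R]_(i, n) :=
  \matrix_(k < i, l < n) 'D_(delta_mx 0 l : 'rV[R]_n) (lieN f h k) x.

Definition open_map_on (R : realType) (n m : nat)
    (H : 'rV[R]_n -> 'rV[R]_m) (S : set 'rV[R]_n) : Prop :=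
  forall U : set 'rV[R]_n, open U -> U `<=` S -> open (H @` U).

Definition PropertyB (R : realType) (n : nat) (f : 'rV[R]_n -> 'rV[R]_n)
    (h : 'rV[R]_n -> R) (S : set 'rV[R]_n) (j : nat) : Prop :=
  forall xa xb : 'rV[R]_n, S xa -> S xb -> xa != xb ->
    Hmap f h j xa = Hmap f h j xb ->
    exists (xak xbk : nat -> 'rV[R]_n),
      (forall k, S (xak k) /\ S (xbk k)) /\
      (fun k => (xak k, xbk k)) @ \oo --> (xa, xb) /\
      (forall k, Hmap f h j (xak k) = Hmap f h j (xbk k) /\
         (\rank (jacH f h j.-1 (xak k)) = j.-1 \/
          \rank (jacH f h j.-1 (xbk k)) = j.-1)).

From HB Require Import structures.
From mathcomp Require Import all_boot all_order all_algebra.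
From mathcomp Require Import all_classical all_reals all_analysis.
From mathcomp Require Import ring lra.
Import Order.TTheory GRing.Theory Num.Theory.
Import numFieldNormedType.Exports.
Local Open Scope classical_set_scope.
Local Open Scope ring_scope.

Set Implicit Arguments.
Unset Strict Implicit.
Unset Printing Implicit Defensive.

(* Write H_j = (phi_0, ..., phi_(j-1)) with phi_k = L_f^k h, and J for the
   Jacobian of (phi_0, ..., phi_(j-2)).  The rank of J is full on a dense subset
   of S: otherwise take a point x1 where rank J is locally maximal but not full,
   and a component phi_i whose gradient row is not among the rows selected by
   [maxrankfun] at x1.  Near x1 the selected rows stay free and keep spanning,
   so by a Lipschitz implicit function argument phi_i is constant on the local
   fibers of the selected components; this contradicts the openness of H_j in
   the direction of its i-th coordinate.  Now if H_j xa = H_j xb, the image of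
   S /\ ball(xb, 1/(k+1)) is a neighbourhood of H_j xa, so by continuity it
   contains the image of a neighbourhood of xa; density provides there a
   full-rank point x_(a,k), and H_j x_(a,k) = H_j x_(b,k) for some x_(b,k) in
   the ball around xb. *)

(* Matrices over a complete type are complete ([mx_complete]); declaring the
   instance lets the Banach fixed point theorem run on row vectors. *)
HB.instance Definition _ (R : realType) (m n : nat) := Complete.on 'M[R]_(m, n).

Section MatrixNorm.
Variable R : realDomainType.

Lemma normr_mx_entry m n (M : 'M[R]_(m, n)) i j : `|M i j| <= `|M|.
Proof.
by rewrite [leRHS]/Num.Def.normr /= mx_normrE; exact: (le_bigmax _ _ (i, j)).
Qed.

Lemma normr_mx_le m n (M : 'M[R]_(m, n)) c :
  0 <= c -> (forall i j, `|M i j| <= c) -> `|M| <= c.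
Proof.
move=> c0 Mc; rewrite /Num.Def.normr /= mx_normrE.
by apply: bigmax_le => // -[i j] _; exact: Mc.
Qed.

Lemma normr_mulmx_le m k n (u : 'M[R]_(m, k)) (A : 'M[R]_(k, n)) :
  `|u *m A| <= k%:R * `|u| * `|A|.
Proof.
apply: normr_mx_le => [|i j]; first by rewrite !mulr_ge0.
rewrite mxE (le_trans (ler_norm_sum _ _ _)) //.
apply: (@le_trans _ _ (\sum_(l < k) `|u| * `|A|)).
  by apply: ler_sum => l _; rewrite normrM ler_pM ?normr_mx_entry.
by rewrite sumr_const card_ord -mulrA mulr_natl.
Qed.

End MatrixNorm.

Lemma near_ball_norm {R : numDomainType} {X : pseudoMetricNormedZmodType R}
    (x : X) (Q : X -> Prop) :
  (\forall y \near x, Q y) -> exists2 d : R, 0 < d & forall y, `|y - x| < d -> Q y.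
Proof.
move/nbhs_ballP => [d d0 dQ]; exists d => // y yd; apply: dQ.
by rewrite -ball_normE /= distrC.
Qed.

Lemma contraction_fixed_point (R : realType) (X : completeNormedModType R)
    (U : set X) (T : X -> X) (q : R) :
  closed U -> U !=set0 -> 0 <= q < 1 -> (forall z, U z -> U (T z)) ->
  (forall z z', U z -> U z' -> `|T z - T z'| <= q * `|z - z'|) ->
  exists2 z, U z & T z = z.
Proof.
move=> cU U0 /andP[q0 q1] TU Tq.
have ctrT : is_contraction (mkfun_fun TU).
  by exists (NngNum q0); split => // -[x y] /= [Ux Uy]; exact: Tq.
by have [z Uz Tz] := banach_fixed_point ctrT cU U0; exists z.
Qed.

Lemma finite_radius (R : realDomainType) (I : finType) (P : I -> R -> Prop) :
  (forall i d d', 0 < d' <= d -> P i d -> P i d') ->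
  (forall i, exists2 d, 0 < d & P i d) ->
  exists2 d, 0 < d & forall i, P i d.
Proof.
move=> Pmono Pex.
have /choice[d dP] : forall i, exists d, 0 < d /\ P i d.
  by move=> i; have [d d0 Pd] := Pex i; exists d.
have dmin0 : 0 < \big[Order.min/1]_i d i.
  apply: (big_ind (fun x => 0 < x)) => // [x y x0 y0|i _]; first by rewrite lt_min x0 y0.
  by case: (dP i).
exists (\big[Order.min/1]_i d i) => // i.
by case: (dP i) => _; apply: Pmono; rewrite dmin0 bigmin_le.
Qed.

Section Regularity.
Variables (R : realType) (n : nat).
Implicit Types (V : normedModType R).

Lemma CkW V k (F : 'rV[R]_n -> V) : Ck k.+1 F -> Ck k F.
Proof.
elim: k F => [|k IHk] F /= [dF CkdF]; first by move=> x; exact: differentiable_continuous.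
by split => // v; apply: IHk; exact: CkdF.
Qed.

Lemma Ck_le V k l (F : 'rV[R]_n -> V) : (k <= l)%N -> Ck l F -> Ck k F.
Proof.
move=> /subnKC <-; elim: (l - k)%N => [|i IHi]; first by rewrite addn0.
by rewrite addnS => /CkW.
Qed.

Lemma Ck_cst V k (c : V) : Ck k (fun _ : 'rV[R]_n => c).
Proof.
elim: k c => [|k IHk] c /=; first by move=> x; exact: cst_continuous.
split=> [x|v]; first exact: differentiable_cst.
by under eq_fun do rewrite derive_cst.
Qed.

Lemma CkD V k (F G : 'rV[R]_n -> V) :
  Ck k F -> Ck k G -> Ck k (fun x => F x + G x).
Proof.
elim: k F G => [|k IHk] F G /=; first by move=> cF cG x; exact: continuousD (cF x) (cG x).
move=> [dF CkdF] [dG CkdG]; split=> [x|v]; first exact: differentiableD (dF x) (dG x).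
under eq_fun do rewrite (deriveD (diff_derivable (dF _)) (diff_derivable (dG _))).
exact: IHk.
Qed.

Lemma CkM k (F G : 'rV[R]_n -> R) :
  Ck k F -> Ck k G -> Ck k (fun x => F x * G x).
Proof.
elim: k F G => [|k IHk] F G /=; first by move=> cF cG x; exact: continuousM (cF x) (cG x).
move=> [dF CkdF] [dG CkdG]; split=> [x|v]; first exact: differentiableM (dF x) (dG x).
under eq_fun do rewrite (deriveM (diff_derivable (dF _)) (diff_derivable (dG _))).
by apply: CkD; apply: IHk => //; apply: CkW.
Qed.

Lemma Ck_sum k m (F : 'I_m -> 'rV[R]_n -> R) :
  (forall i, Ck k (F i)) -> Ck k (fun x => \sum_(i < m) F i x).
Proof.
move=> CkF; rewrite -fct_sumE.
apply: (big_ind (Ck k)) => // [|G H CkG CkH]; first exact: Ck_cst.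
exact: CkD.
Qed.

Lemma Ck_entry k (F : 'rV[R]_n -> 'rV[R]_n) l :
  Ck k F -> Ck k (fun x => F x 0 l).
Proof.
elim: k F => [|k IHk] F /=.
  move=> cF x; apply: (continuous_comp (g := fun M : 'rV[R]_n => M 0 l) (cF x)).
  exact: coord_continuous.
move=> [dF CkdF]; split=> [x|v].
  exact: differentiable_comp (dF x) (differentiable_coord _ _ _).
suff -> : (fun x => 'D_v (fun y => F y 0 l) x) = (fun x => 'D_v F x 0 l) by exact: IHk.
by apply: funext => x; rewrite (derive_mx (diff_derivable (dF x))) mxE.
Qed.

Lemma derive_coordE (phi : 'rV[R]_n -> R) x v : differentiable phi x ->
  'D_v phi x = \sum_(l < n) v 0 l * 'D_(delta_mx 0 l) phi x.
Proof.
move=> dphi; rewrite deriveE // {1}(row_sum_delta v) linear_sum.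
by apply: eq_bigr => l _; rewrite linearZ /= deriveE.
Qed.

Lemma Ck_lie k (f : 'rV[R]_n -> 'rV[R]_n) (phi : 'rV[R]_n -> R) :
  Ck k.+1 f -> Ck k.+1 phi -> Ck k (lie f phi).
Proof.
move=> Ckf [dphi Ckdphi]; rewrite /lie.
under eq_fun do rewrite derive_coordE //.
by apply: Ck_sum => l; apply: CkM; [apply: Ck_entry; exact: CkW | exact: Ckdphi].
Qed.

Lemma Ck_lieN j k (f : 'rV[R]_n -> 'rV[R]_n) (h : 'rV[R]_n -> R) :
  Ck j f -> Ck j h -> (k <= j)%N -> Ck (j - k) (lieN f h k).
Proof.
move=> Ckf Ckh; elim: k => [|k IHk] kj; first by rewrite subn0.
have jk : (j - k)%N = (j - k.+1).+1 by rewrite subnS prednK // subn_gt0.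
rewrite /lieN iterS; apply: Ck_lie; rewrite -jk; last exact/IHk/ltnW.
exact: Ck_le (leq_subr _ _) Ckf.
Qed.

End Regularity.

Definition strict_diff {R : realType} {U V : normedModType R}
    (F : U -> V) (L : U -> V) (x : U) : Prop :=
  forall e : R, 0 < e -> exists2 d : R, 0 < d & forall a b,
    `|a - x| < d -> `|b - x| < d -> `|F b - F a - L (b - a)| <= e * `|b - a|.

Section StrictDifferentiability.
Variables (R : realType) (n : nat).

Lemma is_derive_line (phi : 'rV[R]_n -> R) a w (s : R) :
  differentiable phi (a + s *: w) ->
  is_derive s 1 (fun t => phi (a + t *: w)) ('D_w phi (a + s *: w)).
Proof.
move=> dphi; set F := fun t => phi (a + t *: w).
have quotE : (fun h : R => h^-1 *: ((F \o shift s) (h *: 1) - F s)) =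
    (fun h : R => h^-1 *: ((phi \o shift (a + s *: w)) (h *: w) - phi (a + s *: w))).
  apply: funext => h /=; rewrite /F /shift /=; congr (_ *: (phi _ - _)).
  by rewrite [h%:A]mulr1 scalerDl addrCA addrA.
have dF : derivable F s 1 by rewrite /derivable quotE; exact: diff_derivable.
suff <- : 'D_1 F s = 'D_w phi (a + s *: w) by exact: derivableP.
by rewrite /derive quotE.
Qed.

Lemma segment_in_ball (x0 a b : 'rV[R]_n) (d t : R) :
  `|a - x0| < d -> `|b - x0| < d -> 0 <= t <= 1 -> `|a + t *: (b - a) - x0| < d.
Proof.
move=> ad bd /andP[t0 t1].
have -> : a + t *: (b - a) - x0 = (1 - t) *: (a - x0) + t *: (b - x0).
  by apply/rowP => i; rewrite !mxE; ring.
rewrite (le_lt_trans (ler_normD _ _)) // !normrZ (ger0_norm t0) ger0_norm ?subr_ge0 //.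
set M := Num.max `|a - x0| `|b - x0|.
apply: (@le_lt_trans _ _ ((1 - t) * M + t * M)).
  by apply: lerD; apply: ler_wpM2l; rewrite ?subr_ge0 // le_max lexx ?orbT.
by rewrite -mulrDl subrK mul1r gt_max ad bd.
Qed.

(* Mean value theorem on the segment [a, b], then continuity of the partial
   derivatives at x0. *)
Lemma Ck1_strict_diff (phi : 'rV[R]_n -> R) x0 :
  Ck 1 phi -> strict_diff phi (fun v => 'D_v phi x0) x0.
Proof.
move=> [dphi Cdphi] e e0; set e' := e / (n%:R + 1).
have e'0 : 0 < e' by rewrite divr_gt0 // ltr_wpDl.
have : \forall y \near x0, forall l : 'I_n,
    `|'D_(delta_mx 0 l) phi x0 - 'D_(delta_mx 0 l) phi y| < e'.
  exact: (filter_forall _ (fun l : 'I_n =>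
    (cvgrPdist_lt _ _).1 (Cdphi (delta_mx 0 l) x0) _ e'0)).
move=> /near_ball_norm[d d0 dpartial].
exists d => // a b ad bd; set w := b - a.
have dline (t : R) : t \in `]0, 1[ ->
    is_derive t 1 (fun t => phi (a + t *: w)) ('D_w phi (a + t *: w)).
  by move=> _; exact: is_derive_line.
have cline : continuous (fun t : R => phi (a + t *: w)).
  move=> t; apply: differentiable_continuous; apply/derivable1_diffP.
  by case: (is_derive_line (dphi (a + t *: w))).
have [c c01] := MVT_segment ler01 dline (continuous_subspaceT cline).
rewrite scale1r scale0r addr0 subr0 mulr1 /w [a + (b - a)]addrC subrK => ->.
have c01' : 0 <= c <= 1 by move: c01; rewrite in_itv.
rewrite !derive_coordE ?dphi // -sumrB (le_trans (ler_norm_sum _ _ _)) //.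
apply: (@le_trans _ _ (\sum_(l < n) `|w| * e')).
  apply: ler_sum => l _; rewrite -mulrBr normrM ler_pM ?normr_mx_entry //.
  by rewrite distrC ltW // dpartial // segment_in_ball.
rewrite sumr_const card_ord -mulr_natr -mulrA mulrC ler_wpM2r //.
rewrite /e' mulrAC ler_pdivrMr ?ltr_wpDl // ler_wpM2l ?lerDl //; exact: ltW.
Qed.

Lemma strict_diff_row (r : nat) (phi : 'I_r -> 'rV[R]_n -> R) (L : 'I_r -> 'rV[R]_n -> R) x0 :
  (forall i, strict_diff (phi i) (L i) x0) ->
  strict_diff (fun x => \row_i phi i x) (fun v => \row_i L i v) x0.
Proof.
move=> sdphi e e0.
pose P i d := forall a b, `|a - x0| < d -> `|b - x0| < d ->
  `|phi i b - phi i a - L i (b - a)| <= e * `|b - a|.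
have [d d0 dP] : exists2 d, 0 < d & forall i, P i d.
  apply: finite_radius => [i d d' /andP[_ d'd] Pd a b ad bd|i]; last exact: sdphi.
  exact: Pd (lt_le_trans ad d'd) (lt_le_trans bd d'd).
exists d => // a b ad bd; apply: normr_mx_le => [|k i]; first by rewrite mulr_ge0 // ltW.
by rewrite (ord1 k) !mxE; exact: dP.
Qed.

End StrictDifferentiability.

Definition flat_along_fiber {R : realType} {U V : normedModType R}
    (F : U -> V) (g : U -> R) (p : U) : Prop :=
  forall e : R, 0 < e -> exists2 d : R, 0 < d & forall b,
    `|b - p| < d -> F b = F p -> `|g b - g p| <= e * `|b - p|.

Section FlatAlongFiber.
Variables (R : realType) (U V : normedModType R).

(* On the fiber of F, dF (b - p) is of order o(b - p), and dg is dominated by dF. *)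
Lemma strict_diff_flat (F : U -> V) (dF : U -> V) (g : U -> R) (dg : U -> R) p k :
  strict_diff F dF p -> strict_diff g dg p ->
  0 <= k -> (forall v, `|dg v| <= k * `|dF v|) -> flat_along_fiber F g p.
Proof.
move=> sdF sdg k0 dgk e e0.
have [e' e'0 ee'] : exists2 e', 0 < e' & e = e' * (k + 1).
  by exists (e / (k + 1)); rewrite ?divr_gt0 ?divfK ?gt_eqF ?ltr_wpDl.
have [dF0 dF00 dFp] := sdF e' e'0; have [dg0 dg00 dgp] := sdg e' e'0.
have pdF : `|p - p| < dF0 by rewrite subrr normr0.
have pdg : `|p - p| < dg0 by rewrite subrr normr0.
exists (Num.min dF0 dg0) => [|b]; first by rewrite lt_min dF00 dg00.
rewrite lt_min => /andP[bdF bdg] Fb.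
have Fe := dFp p b pdF bdF; have ge := dgp p b pdg bdg.
rewrite Fb subrr sub0r normrN in Fe.
have -> : g b - g p = (g b - g p - dg (b - p)) + dg (b - p) by rewrite subrK.
rewrite (le_trans (ler_normD _ _)) // (le_trans (lerD ge (dgk (b - p)))) //.
have -> : e * `|b - p| = e' * `|b - p| + k * (e' * `|b - p|) by rewrite ee'; ring.
by rewrite lerD2l ler_wpM2l.
Qed.

Lemma is_derive0_increments (phi : R -> R) (s : R) :
  (forall e : R, 0 < e -> exists2 d : R, 0 < d & forall h : R, h != 0 ->
     `|h| < d -> `|phi (s + h) - phi s| <= e * `|h|) ->
  is_derive s 1 phi 0.
Proof.
move=> small.
have quot0 : (fun h : R => h^-1 *: ((phi \o shift s) (h *: 1) - phi s)) @ 0^' --> (0 : R).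
  apply/cvgrPdist_le => e e0; have [d d0 dphi] := small e e0.
  near=> h.
  have h0 : h != 0 by near: h; exact: nbhs_dnbhs_neq.
  have hd : `|h| < d by near: h; exact: dnbhs0_lt.
  rewrite sub0r normrN /= /shift /= [h%:A]mulr1 normrZ normfV.
  by rewrite ler_pdivrMl ?normr_gt0 // mulrC [h + s]addrC dphi.
apply: DeriveDef; first exact: cvgP quot0.
by rewrite /derive; exact: cvg_lim quot0.
Unshelve. all: by end_near. Qed.

(* psi is a Lipschitz path inside one fiber of F, so g \o psi has zero derivative. *)
Lemma fiber_path_const (F : U -> V) (g : U -> R) (psi : R -> U) (K : R) :
  (forall s, `|s| < 2 -> flat_along_fiber F g (psi s)) ->
  (forall s s', `|s| < 2 -> `|s'| < 2 -> F (psi s') = F (psi s)) ->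
  (forall s s', `|s| < 2 -> `|s'| < 2 -> `|psi s' - psi s| <= K * `|s' - s|) ->
  g (psi 1) = g (psi 0).
Proof.
move=> flat Fpsi Lpsi.
have K1 : 0 < `|K| + 1 by rewrite ltr_wpDl.
have dgpsi (s : R) : `|s| < 2 -> is_derive s 1 (g \o psi) 0.
  move=> s2; apply: is_derive0_increments => e e0.
  have [d d0 dflat] := flat s s2 (e / (`|K| + 1)) (divr_gt0 e0 K1).
  exists (Num.min (2 - `|s|) (d / (`|K| + 1))) => [|h h0].
    by rewrite lt_min subr_gt0 s2 divr_gt0.
  rewrite lt_min ltrBrDr => /andP[sh hd].
  have sh2 : `|s + h| < 2 by rewrite (le_lt_trans (ler_normD _ _)) // addrC.
  have psiK : `|psi (s + h) - psi s| <= (`|K| + 1) * `|h|.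
    rewrite (le_trans (Lpsi _ _ s2 sh2)) // addrC addKr ler_wpM2r //.
    by rewrite (le_trans (ler_norm K)) // lerDl.
  rewrite /comp (le_trans (dflat _ _ (Fpsi _ _ s2 sh2))) //.
    by rewrite (le_lt_trans psiK) // mulrC -ltr_pdivlMr.
  by rewrite mulrAC ler_pdivrMr // -mulrA ler_wpM2l ?(ltW e0) // mulrC.
have cgpsi : {within `[0, 1], continuous (g \o psi)}.
  apply: continuous_subspace_itv => t; rewrite in_itv /= => /andP[t0 t1].
  have t2 : `|t| < 2 by rewrite ger0_norm // (le_lt_trans t1) // ltr1n.
  apply: differentiable_continuous; apply/derivable1_diffP.
  by case: (dgpsi t t2).
have dgpsi01 (t : R) : t \in `]0, 1[ -> is_derive t 1 (g \o psi) 0.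
  rewrite in_itv /= => /andP[t0 t1]; apply: dgpsi.
  by rewrite ger0_norm ?ltW // (lt_trans t1) // ltr1n.
have [c _] := MVT_segment ler01 dgpsi01 cgpsi.
by rewrite mul0r => /eqP; rewrite subr_eq0 => /eqP.
Qed.

End FlatAlongFiber.

Section ImplicitFunction.
Variables (R : realType) (n r : nat) (F : 'rV[R]_n -> 'rV[R]_r) (x1 : 'rV[R]_n).
Variables (A : 'M[R]_(n, r)) (D : 'M[R]_(r, n)) (eps d rho eta : R).
Hypothesis DA : D *m A = 1%:M.
Hypothesis eps_ge0 : 0 <= eps.
Hypothesis eps_D : eps * (r%:R * `|D|) <= 2^-1.
Hypothesis F_approx : forall a b, `|a - x1| < d -> `|b - x1| < d ->
  `|F b - F a - (b - a) *m A| <= eps * `|b - a|.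
Hypothesis rho_ge0 : 0 <= rho.
Hypothesis radii : r%:R * `|D| * rho + eta <= d.
Hypothesis eta_rho : (n%:R * `|A| + eps) * eta <= rho / 2.

Let cD := r%:R * `|D|.
Let L := n%:R * `|A| + eps.

Let cD_ge0 : 0 <= cD. Proof. by rewrite mulr_ge0. Qed.
Let L_ge0 : 0 <= L. Proof. by rewrite addr_ge0 ?mulr_ge0. Qed.

Let normr_mulD (z : 'rV[R]_r) : `|z *m D| <= cD * `|z|.
Proof. by rewrite (le_trans (normr_mulmx_le _ _)) // mulrAC. Qed.

(* Simplified Newton map for F (v + z D) = F x1: the derivative is frozen at x1,
   where D is a right inverse of it. *)
Let T (v : 'rV[R]_n) (z : 'rV[R]_r) := z - (F (v + z *m D) - F x1).

Let T_fixed v z : (T v z = z) <-> (F (v + z *m D) = F x1).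
Proof.
rewrite /T; split=> [/eqP|->]; last by rewrite subrr subr0.
by rewrite subr_eq addrC -subr_eq subrr eq_sym subr_eq0 => /eqP.
Qed.

Let implicit_ball v z :
  `|v - x1| < eta -> `|z| <= rho -> `|v + z *m D - x1| < d.
Proof.
move=> vx zr; rewrite addrAC (le_lt_trans (ler_normD _ _)) // (lt_le_trans _ radii) //.
by rewrite [X in _ < X]addrC ltr_leD // (le_trans (normr_mulD z)) // ler_wpM2l.
Qed.

Let F_lipschitz a b : `|a - x1| < d -> `|b - x1| < d ->
  `|F b - F a| <= L * `|b - a|.
Proof.
move=> ad bd; rewrite -[F b - F a](subrK ((b - a) *m A)).
rewrite (le_trans (ler_normD _ _)) // /L mulrDl addrC lerD ?F_approx //.
by rewrite (le_trans (normr_mulmx_le _ _)) // mulrAC.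
Qed.

Let T_contraction v z z' :
  `|v + z *m D - x1| < d -> `|v + z' *m D - x1| < d ->
  `|T v z - T v z'| <= 2^-1 * `|z - z'|.
Proof.
move=> zd z'd; set b := v + z *m D; set a := v + z' *m D.
have ba : b - a = (z - z') *m D.
  by rewrite /b /a mulmxBl; apply/rowP => i; rewrite !mxE; ring.
have -> : T v z - T v z' = - (F b - F a - (b - a) *m A).
  rewrite ba -mulmxA DA mulmx1 /T -/a -/b.
  by apply/rowP => i; rewrite !mxE; ring.
rewrite normrN (le_trans (F_approx z'd zd)) // ba.
rewrite (le_trans (ler_wpM2l eps_ge0 (normr_mulD _))) // mulrA.
by rewrite ler_wpM2r.
Qed.

Let T_closed_ball v z : `|v - x1| < eta -> `|z| <= rho -> `|T v z| <= rho.
Proof.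
move=> vx zr.
have z0 : `|0 : 'rV[R]_r| <= rho by rewrite normr0.
have Tz0 := T_contraction (implicit_ball vx zr) (implicit_ball vx z0).
have T0 : `|T v 0| <= L * `|v - x1|.
  have eta_d : eta <= d by apply: le_trans radii; rewrite lerDr mulr_ge0.
  have vd := lt_le_trans vx eta_d.
  rewrite /T mul0mx addr0 sub0r normrN F_lipschitz // subrr normr0.
  exact: le_lt_trans (normr_ge0 _) vd.
rewrite -[T v z](subrK (T v 0)) (le_trans (ler_normD _ _)) //.
rewrite subr0 in Tz0; rewrite (le_trans (lerD Tz0 T0)) //.
have := ler_wpM2l L_ge0 (ltW vx); have := eta_rho; rewrite -/L; lra.
Qed.

Let implicit_exists v : `|v - x1| < eta ->
  exists2 z, `|z| <= rho & F (v + z *m D) = F x1.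
Proof.
move=> vx; pose U := [set z : 'rV[R]_r | `|z| <= rho].
have cU : closed U.
  suff -> : U = closed_ball_ Num.norm 0 rho by exact: closed_closed_ball_.
  by apply/seteqP; split => z; rewrite /U /closed_ball_ /= sub0r normrN.
have [||||z zr Tz] := @contraction_fixed_point R _ U (T v) 2^-1 cU.
- by exists 0; rewrite /U /= normr0.
- by rewrite invr_ge0 ler0n invf_lt1 ?ltr1n.
- by move=> z; exact: T_closed_ball.
- by move=> z z' zr z'r; exact: T_contraction (implicit_ball vx zr) (implicit_ball vx z'r).
by exists z => //; exact/T_fixed.
Qed.

Let implicit_unique v z z' : `|v - x1| < eta -> `|z| <= rho -> `|z'| <= rho ->
  F (v + z *m D) = F x1 -> F (v + z' *m D) = F x1 -> z = z'.
Proof.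
move=> vx zr z'r /T_fixed Tz /T_fixed Tz'.
have := T_contraction (implicit_ball vx zr) (implicit_ball vx z'r).
rewrite Tz Tz' => zz'; apply/eqP; rewrite -subr_eq0 -normr_eq0 eq_le normr_ge0 andbT.
by move: zz'; have := normr_ge0 (z - z'); lra.
Qed.

Let implicit_lipschitz v v' z z' :
  `|v - x1| < eta -> `|v' - x1| < eta -> `|z| <= rho -> `|z'| <= rho ->
  F (v + z *m D) = F x1 -> F (v' + z' *m D) = F x1 ->
  `|z' - z| <= 2 * L * `|v' - v|.
Proof.
move=> vx v'x zr z'r /T_fixed Tz /T_fixed Tz'.
have zz' := T_contraction (implicit_ball v'x z'r) (implicit_ball v'x zr).
have vv' : `|T v' z - T v z| <= L * `|v' - v|.
  have -> : T v' z - T v z = - (F (v' + z *m D) - F (v + z *m D)).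
    by rewrite /T; apply/rowP => i; rewrite !mxE; ring.
  have -> : v' - v = (v' + z *m D) - (v + z *m D) by apply/rowP => i; rewrite !mxE; ring.
  by rewrite normrN F_lipschitz ?implicit_ball.
have : `|z' - z| <= `|T v' z' - T v' z| + `|T v' z - T v z|.
  have -> : z' - z = (T v' z' - T v' z) + (T v' z - T v z) by rewrite Tz' Tz addrA subrK.
  exact: ler_normD.
lra.
Qed.

Let implicit_function : exists zf : 'rV[R]_n -> 'rV[R]_r, forall v, `|v - x1| < eta ->
  `|zf v| <= rho /\ F (v + zf v *m D) = F x1.
Proof.
have /choice[zf zfP] : forall v, exists z : 'rV[R]_r, `|v - x1| < eta ->
    `|z| <= rho /\ F (v + z *m D) = F x1.
  move=> v; have [vx|] := pselect (`|v - x1| < eta); last by exists 0.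
  by have [z zr Fz] := implicit_exists vx; exists z.
by exists zf.
Qed.

Lemma implicit_path x' : `|x' - x1| < eta / 2 -> F x' = F x1 ->
  exists psi : R -> 'rV[R]_n, exists K : R,
  [/\ psi 0 = x1, psi 1 = x',
      forall s, `|s| < 2 -> `|psi s - x1| < d /\ F (psi s) = F x1 &
      forall s s', `|s| < 2 -> `|s'| < 2 -> `|psi s' - psi s| <= K * `|s' - s|].
Proof.
move=> x'x Fx'.
have [zf zfP] := implicit_function.
have zfE v z : `|v - x1| < eta -> `|z| <= rho -> F (v + z *m D) = F x1 -> zf v = z.
  by move=> vx zr Fz; have [zfr Fzf] := zfP v vx; exact: implicit_unique Fzf Fz.
pose line s := x1 + s *: (x' - x1).
have lineB s s' : line s' - line s = (s' - s) *: (x' - x1).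
  by apply/rowP => i; rewrite !mxE; ring.
have line_eta s : `|s| < 2 -> `|line s - x1| < eta.
  move=> s2; rewrite /line addrAC subrr add0r normrZ.
  have := ler_wpM2r (normr_ge0 (x' - x1)) (ltW s2); lra.
have x1_eta : `|x1 - x1| < eta by rewrite subrr normr0; have := normr_ge0 (x' - x1); lra.
pose psi s := line s + zf (line s) *m D.
have zf_x1 : zf x1 = 0 by apply: zfE; rewrite ?normr0 ?mul0mx ?addr0.
have zf_x' : zf x' = 0.
  apply: zfE; rewrite ?normr0 ?mul0mx ?addr0 //.
  by have := normr_ge0 (x' - x1); lra.
exists psi, (`|x' - x1| * (1 + cD * (2 * L))); split.
- by rewrite /psi /line scale0r addr0 zf_x1 mul0mx addr0.
- by rewrite /psi /line scale1r [x1 + _]addrC subrK zf_x' mul0mx addr0.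
- move=> s s2; have [zr Fz] := zfP _ (line_eta s s2).
  by split => //; exact: implicit_ball (line_eta s s2) zr.
move=> s s' s2 s'2; have [zr Fz] := zfP _ (line_eta s s2).
have [z'r Fz'] := zfP _ (line_eta s' s'2).
have zz' := implicit_lipschitz (line_eta s s2) (line_eta s' s'2) zr z'r Fz Fz'.
have -> : psi s' - psi s = (line s' - line s) + (zf (line s') - zf (line s)) *m D.
  by rewrite /psi mulmxBl; apply/rowP => i; rewrite !mxE; ring.
rewrite (le_trans (ler_normD _ _)) // (le_trans (lerD (lexx _) (normr_mulD _))) //.
move: zz'; rewrite lineB normrZ => zz'.
have := ler_wpM2l cD_ge0 zz'; have := normr_ge0 (x' - x1); have := normr_ge0 (s' - s).
nra.
Qed.

End ImplicitFunction.

Lemma fiber_path (R : realType) n r (F : 'rV[R]_n -> 'rV[R]_r) (x1 : 'rV[R]_n)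
    (A : 'M[R]_(n, r)) (D : 'M[R]_(r, n)) (delta : R) :
  D *m A = 1%:M -> strict_diff F (mulmx^~ A) x1 -> 0 < delta ->
  exists2 eta : R, 0 < eta & forall x', `|x' - x1| < eta -> F x' = F x1 ->
  exists psi : R -> 'rV[R]_n, exists K : R,
  [/\ psi 0 = x1, psi 1 = x',
      forall s, `|s| < 2 -> `|psi s - x1| < delta /\ F (psi s) = F x1 &
      forall s s', `|s| < 2 -> `|s'| < 2 -> `|psi s' - psi s| <= K * `|s' - s|].
Proof.
move=> DA sdF delta0; set cD := r%:R * `|D|; set L0 := n%:R * `|A|.
have cD0 : 0 <= cD by rewrite mulr_ge0.
have L00 : 0 <= L0 by rewrite mulr_ge0.
have posq (x y : R) : 0 < x -> 0 <= y -> exists2 q, 0 < q & q * (2 * (y + 1)) = x.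
  move=> x0 y0; have y1 : 0 < 2 * (y + 1) by rewrite mulr_gt0 // ltr_wpDl.
  by exists (x / (2 * (y + 1))); rewrite ?divr_gt0 ?divfK ?gt_eqF.
(* eps makes the Newton map a 1/2-contraction; rho and eta keep v + z D in the
   ball where the estimate holds and make the Newton map preserve the rho-ball. *)
have [eps eps0 epsE] := posq 1 cD ltr01 cD0.
have [d0 d00 F_approx] := sdF eps eps0.
have d0' : 0 < Num.min d0 delta by rewrite lt_min d00 delta0.
have [rho rho0 rhoE] := posq _ cD d0' cD0.
have [q q0 qE] := posq rho (L0 + eps) rho0 (addr_ge0 L00 (ltW eps0)).
pose eta := Num.min (Num.min d0 delta / 2) q.
have eta0 : 0 < eta by rewrite lt_min q0 divr_gt0.
have [eta_d eta_q] : eta <= Num.min d0 delta / 2 /\ eta <= q.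
  by split; rewrite ge_min lexx ?orbT.
have approx a b : `|a - x1| < Num.min d0 delta -> `|b - x1| < Num.min d0 delta ->
    `|F b - F a - (b - a) *m A| <= eps * `|b - a|.
  by rewrite !lt_min => /andP[ad _] /andP[bd _]; exact: F_approx.
exists (eta / 2) => [|x' x'x Fx']; first by rewrite divr_gt0.
have eps_D : eps * cD <= 2^-1 by nra.
have radii : cD * rho + eta <= Num.min d0 delta by nra.
have eta_rho : (L0 + eps) * eta <= rho / 2.
  by have := ler_wpM2l (addr_ge0 L00 (ltW eps0)) eta_q; nra.
have [psi [K [psi0 psi1 psiP Kpsi]]] :=
  implicit_path DA (ltW eps0) eps_D approx (ltW rho0) radii eta_rho x'x Fx'.
exists psi, K; split => // s s2; have [psid Fpsi] := psiP s s2; split => //.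
by apply: lt_le_trans psid _; rewrite ge_min lexx orbT.
Qed.

Lemma fiber_const (R : realType) n r (F : 'rV[R]_n -> 'rV[R]_r)
    (A : 'rV[R]_n -> 'M[R]_(n, r)) (g : 'rV[R]_n -> R) (dg : 'rV[R]_n -> 'rV[R]_n -> R)
    (x1 : 'rV[R]_n) (D : 'M[R]_(r, n)) (delta : R) :
  0 < delta -> D *m A x1 = 1%:M ->
  (forall p, `|p - x1| < delta -> strict_diff F (mulmx^~ (A p)) p) ->
  (forall p, `|p - x1| < delta -> strict_diff g (dg p) p) ->
  (forall p, `|p - x1| < delta ->
     exists2 k, 0 <= k & forall v, `|dg p v| <= k * `|v *m A p|) ->
  exists2 eta : R, 0 < eta & forall x', `|x' - x1| < eta -> F x' = F x1 -> g x' = g x1.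
Proof.
move=> delta0 DA sdF sdg dgA.
have x1d : `|x1 - x1| < delta by rewrite subrr normr0.
have [eta eta0 path] := fiber_path DA (sdF x1 x1d) delta0.
exists eta => // x' x'x Fx'.
have [psi [K [psi0 psi1 psiP Kpsi]]] := path x' x'x Fx'.
rewrite -psi1 -[in RHS]psi0; apply: (@fiber_path_const _ _ _ F _ _ K) Kpsi.
  move=> s s2; have [psid _] := psiP s s2; have [k k0 dgk] := dgA _ psid.
  exact: strict_diff_flat (sdF _ psid) (sdg _ psid) k0 dgk.
by move=> s s' s2 s'2; have [_ ->] := psiP s s2; have [_ ->] := psiP s' s'2.
Qed.

Lemma continuous_mx_entries (R : realType) (T : topologicalType) m k
    (M : T -> 'M[R]_(m, k)) x :
  (forall i j, {for x, continuous (fun y => M y i j)}) -> {for x, continuous M}.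
Proof.
move=> cM; apply/cvgrPdist_le => e e0.
have : \forall y \near x, forall i j, `|M x i j - M y i j| < e.
  apply: filter_forall => i; apply: filter_forall => j.
  exact: (cvgrPdist_lt _ _).1 (cM i j) _ e0.
apply: filterS => y Mye; apply: normr_mx_le => [|i j]; first exact: ltW.
by rewrite !mxE ltW // Mye.
Qed.

Lemma open_map_shift (R : realType) n p (H : 'rV[R]_n -> 'rV[R]_p)
    (S : set 'rV[R]_n) x1 d (i : 'I_p) :
  open_map_on H S -> 0 < d -> (forall x, `|x - x1| < d -> S x) ->
  exists t : R, exists2 x', `|x' - x1| < d & 0 < t /\ H x' = H x1 + t *: delta_mx 0 i.
Proof.
move=> oH d0 dS; pose V := ball x1 d.
have oHV : open (H @` V).
  apply: oH => [|x]; first exact: ball_open.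
  by rewrite /V -ball_normE /= distrC; exact: dS.
have HVx1 : (H @` V) (H x1) by exists x1 => //; exact: ballxx.
have [tau tau0 tauV] := near_ball_norm (open_nbhs_nbhs (conj oHV HVx1)).
have tau2 : 0 < tau / 2 by rewrite divr_gt0.
have ei : `|delta_mx 0 i : 'rV[R]_p| <= 1.
  by apply: normr_mx_le => // a b; rewrite mxE; case: (_ && _); rewrite ?normr1 ?normr0.
have [|x' Vx' Hx'] := tauV (H x1 + (tau / 2) *: delta_mx 0 i).
  rewrite addrC addKr normrZ gtr0_norm // (le_lt_trans (ler_wpM2l (ltW tau2) ei)) //.
  by rewrite mulr1 ltr_pdivrMr // ltr_pMr // ltr1n.
exists (tau / 2), x' => //.
by move: Vx'; rewrite /V -ball_normE /= distrC.
Qed.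

Lemma row_free_near (R : realFieldType) n r (M M1 : 'M[R]_(r, n)) (B : 'M[R]_(n, r)) :
  M1 *m B = 1%:M -> `|M - M1| * (r%:R * (n%:R * `|B|)) < 1 -> row_free M.
Proof.
move=> M1B small; apply: inj_row_free => z zM.
have zE : z = - (z *m (M - M1) *m B).
  by rewrite mulmxBr zM sub0r mulNmx opprK -mulmxA M1B mulmx1.
have zle : `|z| <= n%:R * (r%:R * `|z| * `|M - M1|) * `|B|.
  rewrite {1}zE normrN (le_trans (normr_mulmx_le _ _)) // ler_wpM2r //.
  by rewrite ler_wpM2l // normr_mulmx_le.
have : `|z| = 0.
  have := normr_ge0 z; have := normr_ge0 (M - M1); have := normr_ge0 B.
  have : (0 : R) <= r%:R := ler0n _ _; have : (0 : R) <= n%:R := ler0n _ _.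
  nra.
by move/eqP; rewrite normr_eq0 => /eqP.
Qed.

Lemma normr_rowsubB_le (R : realDomainType) m m' n (f : 'I_m' -> 'I_m)
    (M N : 'M[R]_(m, n)) :
  `|rowsub f M - rowsub f N| <= `|M - N|.
Proof.
apply: normr_mx_le => // i j; rewrite !mxE.
by have := normr_mx_entry (M - N) (f i) j; rewrite !mxE.
Qed.

(* The selected rows stay free nearby, so the rank bound forces them to span. *)
Lemma local_max_rank_span (R : realType) (T : topologicalType) m k
    (M : T -> 'M[R]_(m, k)) x1 :
  {for x1, continuous M} -> (\forall x \near x1, \rank (M x) <= \rank (M x1))%N ->
  \forall x \near x1, (M x <= rowsub (maxrankfun (M x1)) (M x))%MS.
Proof.
move=> cM rank_le; set f := maxrankfun (M x1).
have [B fB] := row_freeP (maxrowsub_free (M x1)).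
set c := (\rank (M x1))%:R * (k%:R * `|B|).
have c1 : 0 < (c + 1)^-1 by rewrite invr_gt0 ltr_wpDl // !mulr_ge0.
near=> x.
have free : row_free (rowsub f (M x)).
  apply: row_free_near fB _.
  apply: (@le_lt_trans _ _ ((c + 1)^-1 * c)); last first.
    by rewrite ltr_pdivrMl ?ltr_wpDl ?mulr_ge0 // mulr1 ltrDl.
  rewrite ler_wpM2r ?mulr_ge0 // (le_trans (normr_rowsubB_le _ _ _)) // distrC ltW //.
  by near: x; exact: (cvgrPdist_lt _ _).1 cM _ c1.
have sub := rowsub_sub f (M x).
have [_ <-] := mxrank_leqif_sup sub.
rewrite eqn_leq mxrankS //= (eqP free).
by near: x.
Unshelve. all: by end_near. Qed.

(* [jacH f h i] is convertible to [jac (fun k : 'I_i => lieN f h k)]. *)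
Definition jac {R : realType} {n m : nat} (phi : 'I_m -> 'rV[R]_n -> R)
    (x : 'rV[R]_n) : 'M[R]_(m, n) :=
  \matrix_(k, l) 'D_(delta_mx 0 l) (phi k) x.

Section Jacobian.
Variables (R : realType) (n m : nat) (phi : 'I_m -> 'rV[R]_n -> R).

Lemma rowsub_jac m' (f : 'I_m' -> 'I_m) x :
  rowsub f (jac phi x) = jac (fun a => phi (f a)) x.
Proof. by apply/matrixP => a l; rewrite !mxE. Qed.

Lemma derive_jacE k x v : differentiable (phi k) x ->
  'D_v (phi k) x = (v *m (row k (jac phi x))^T) 0 0.
Proof.
by move=> dphi; rewrite derive_coordE // !mxE; apply: eq_bigr => l _; rewrite !mxE.
Qed.

Lemma strict_diff_jac x : (forall k, Ck 1 (phi k)) ->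
  strict_diff (fun y => \row_k phi k y) (mulmx^~ (jac phi x)^T) x.
Proof.
move=> C1; have /strict_diff_row : forall k, strict_diff (phi k) (fun v => 'D_v (phi k) x) x.
  by move=> k; exact: Ck1_strict_diff.
suff -> : (fun v => \row_k 'D_v (phi k) x) = mulmx^~ (jac phi x)^T by [].
apply: funext => v; apply/rowP => k; rewrite mxE derive_jacE; last by case: (C1 k).
by rewrite !mxE; apply: eq_bigr => l _; rewrite !mxE.
Qed.

Lemma continuous_jac : (forall k, Ck 1 (phi k)) -> continuous (jac phi).
Proof.
move=> C1 x; apply: continuous_mx_entries => k l.
have -> : (fun y => jac phi y k l) = 'D_(delta_mx 0 l) (phi k).
  by apply: funext => y; rewrite mxE.
by case: (C1 k) => _ Cdphi; exact: Cdphi.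
Qed.

Lemma normr_derive_row_le r k x (c : 'rV[R]_r) (M : 'M[R]_(r, n)) v :
  differentiable (phi k) x -> row k (jac phi x) = c *m M ->
  `|'D_v (phi k) x| <= r%:R * `|c^T| * `|v *m M^T|.
Proof.
move=> dphi kM; rewrite derive_jacE // kM trmx_mul mulmxA.
rewrite (le_trans (normr_mx_entry _ _ _)) // (le_trans (normr_mulmx_le _ _)) //.
by rewrite mulrAC.
Qed.

End Jacobian.

Lemma local_max_rank_fiber_const (R : realType) n m (phi : 'I_m -> 'rV[R]_n -> R)
    x1 (i : 'I_m) :
  (forall k, Ck 1 (phi k)) ->
  (\forall x \near x1, \rank (jac phi x) <= \rank (jac phi x1))%N ->
  exists2 eta : R, 0 < eta & forall x', `|x' - x1| < eta ->
    (forall a, phi (maxrankfun (jac phi x1) a) x' = phi (maxrankfun (jac phi x1) a) x1) ->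
    phi i x' = phi i x1.
Proof.
move=> C1 rank_le; set f := maxrankfun (jac phi x1).
have cJ : {for x1, continuous (jac phi)} by apply: continuous_jac.
have /near_ball_norm[d d0 span] := local_max_rank_span cJ rank_le.
have [B fB] := row_freeP (maxrowsub_free (jac phi x1)).
have [||||eta eta0 const] := @fiber_const R n _ (fun x => \row_a phi (f a) x)
    (fun p => (jac (fun a => phi (f a)) p)^T) (phi i) (fun p v => 'D_v (phi i) p)
    x1 B^T d d0.
- have -> : jac (fun a => phi (f a)) x1 = rowsub f (jac phi x1) by rewrite rowsub_jac.
  by rewrite -trmx_mul fB trmx1.
- by move=> p _; apply: (@strict_diff_jac R n _ (fun a => phi (f a))) => a; exact: C1.
- by move=> p _; exact: Ck1_strict_diff.
- move=> p pd; have /submxP[c ic] := submx_trans (row_sub i _) (span p pd).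
  exists ((\rank (jac phi x1))%:R * `|c^T|); first by rewrite mulr_ge0.
  rewrite rowsub_jac in ic.
  by move=> v; apply: normr_derive_row_le ic; case: (C1 i).
by exists eta => // x' x'x fx'; apply: const => //; apply/rowP => a; rewrite !mxE.
Qed.

Lemma ord_not_onto m r (f : 'I_r -> 'I_m) : (r < m)%N -> exists i, forall a, f a != i.
Proof.
move=> rm; have /subsetPn[i _ ni] : ~~ ('I_m \subset codom f).
  apply: contraL rm => /subset_leq_card; rewrite card_ord -leqNgt => /leq_trans; apply.
  by rewrite (leq_trans (card_size _)) // size_codom card_ord.
by exists i => a; apply: contraNneq ni => <-; exact: codom_f.
Qed.

Lemma local_max_rank_full (R : realType) n m p (phi : nat -> 'rV[R]_n -> R)
    (S : set 'rV[R]_n) x1 d :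
  (m <= p)%N -> (forall k, (k < m)%N -> Ck 1 (phi k)) ->
  open_map_on (fun x => \row_(k < p) phi k x) S -> 0 < d ->
  (forall x, `|x - x1| < d -> S x /\
    (\rank (jac (fun k : 'I_m => phi k) x) <= \rank (jac (fun k : 'I_m => phi k) x1))%N) ->
  \rank (jac (fun k : 'I_m => phi k) x1) = m.
Proof.
move=> mp C1 oH d0 loc; set J := jac (fun k : 'I_m => phi k).
apply/eqP; rewrite eqn_leq rank_leq_row /= leqNgt; apply/negP => rk_lt.
have [i0 fi0] := ord_not_onto (maxrankfun (J x1)) rk_lt.
have rank_near : (\forall x \near x1, \rank (J x) <= \rank (J x1))%N.
  apply/nbhs_ballP; exists d => // x; rewrite -ball_normE /= distrC => xd.
  by case: (loc x xd).
have [eta eta0 const] := local_max_rank_fiber_const i0 (fun k => C1 k (ltn_ord k)) rank_near.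
have de0 : 0 < Num.min eta d by rewrite lt_min eta0 d0.
have deS x : `|x - x1| < Num.min eta d -> S x.
  by rewrite lt_min => /andP[_ xd]; case: (loc x xd).
have [t [x' x'x [t0 Hx']]] := open_map_shift (widen_ord mp i0) oH de0 deS.
have coord (k : 'I_m) : phi k x' = phi k x1 + t * (k == i0)%:R.
  have := congr1 (fun M : 'rV[R]_p => M 0 (widen_ord mp k)) Hx'.
  by rewrite !mxE /= -(inj_eq val_inj) /= (inj_eq val_inj).
move: x'x; rewrite lt_min => /andP[x'eta _].
have fiber a : phi (maxrankfun (J x1) a) x' = phi (maxrankfun (J x1) a) x1.
  by rewrite coord (negbTE (fi0 a)) mulr0 addr0.
have := const x' x'eta fiber; rewrite coord eqxx mulr1 => /eqP.
by rewrite -subr_eq0 [_ + t]addrC addrK (gt_eqF t0).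
Qed.

Lemma dense_full_rank (R : realType) n m p (phi : nat -> 'rV[R]_n -> R)
    (S : set 'rV[R]_n) x0 e :
  (m <= p)%N -> (forall k, (k < m)%N -> Ck 1 (phi k)) -> open S ->
  open_map_on (fun x => \row_(k < p) phi k x) S -> S x0 -> 0 < e ->
  exists2 x, S x /\ `|x - x0| < e & \rank (jac (fun k : 'I_m => phi k) x) = m.
Proof.
move=> mp C1 oS oH Sx0 e0; set J := jac (fun k : 'I_m => phi k).
have [d d0 dS] := near_ball_norm (open_nbhs_nbhs (conj oS Sx0)).
set dl := Num.min d e.
have [dl_d dl_e] : dl <= d /\ dl <= e by split; rewrite ge_min lexx ?orbT.
pose P r := `[< exists2 x, `|x - x0| < dl & \rank (J x) = r >].
have P_x0 : P (\rank (J x0)).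
  by apply/asboolP; exists x0; rewrite // subrr normr0 lt_min d0 e0.
have P_le r : P r -> (r <= m)%N by move=> /asboolP[x _ <-]; exact: rank_leq_row.
have exP : exists r, P r by exists (\rank (J x0)).
case: (ex_maxnP exP P_le) => r /asboolP[x1 x1x0 <-] rmax.
have x1S : S x1 by apply: dS; exact: lt_le_trans x1x0 dl_d.
exists x1; first by split=> //; exact: lt_le_trans x1x0 dl_e.
have dl1 : 0 < dl - `|x1 - x0| by rewrite subr_gt0.
apply: (local_max_rank_full mp C1 oH dl1) => x; rewrite ltrBrDr => xd.
have xx0 : `|x - x0| < dl.
  by rewrite -(subrK x1 x) -addrA (le_lt_trans (ler_normD _ _)).
split; first by apply: dS; exact: lt_le_trans xx0 dl_d.
by apply: rmax; apply/asboolP; exists x.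
Qed.

Lemma cvg_dist_harmonic (R : realType) (V : normedModType R) (u : nat -> V) (a : V) :
  (forall k, `|u k - a| < harmonic k) -> u @ \oo --> a.
Proof.
move=> ua; apply/cvgrPdist_lt => e e0.
have ue k : `|0 - harmonic k| < e -> `|a - u k| < e.
  rewrite sub0r normrN distrC => ke.
  by rewrite (lt_trans (ua k)) // (le_lt_trans (ler_norm _)).
have harm_e := (cvgrPdist_lt _ _).1 (@cvg_harmonic R) e e0.
exact: filterS ue (harm_e eventually_filter).
Qed.

Lemma open_map_pair_approx (R : realType) n p (H : 'rV[R]_n -> 'rV[R]_p)
    (S G : set 'rV[R]_n) xa xb e :
  open S -> open_map_on H S -> {for xa, continuous H} ->
  (forall x0 e, S x0 -> 0 < e -> exists2 x, S x /\ `|x - x0| < e & G x) ->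
  S xa -> S xb -> H xa = H xb -> 0 < e ->
  exists x, exists y, [/\ S x /\ S y, `|x - xa| < e, `|y - xb| < e, H x = H y & G x].
Proof.
move=> oS oH cH dense Sxa Sxb Hab e0; pose V := ball xb e `&` S.
have oHV : open (H @` V) by apply: oH => [|x []//]; apply: openI => //; exact: ball_open.
have HVa : (H @` V) (H xa) by exists xb => //; split => //; exact: ballxx.
have /near_ball_norm[d d0 dHV] : \forall x \near xa, (H @` V) (H x).
  exact: cH (open_nbhs_nbhs (conj oHV HVa)).
have [|x [Sx xd] Gx] := dense xa (Num.min d e) Sxa; first by rewrite lt_min d0 e0.
move: xd; rewrite lt_min => /andP[xd xe].
have [y [yb Sy] Hy] := dHV x xd.
by exists x, y; split => //; move: yb; rewrite -ball_normE /= distrC.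
Qed.

Theorem lemma3 (R : realType) (n : nat)
    (f g : 'rV[R]_n -> 'rV[R]_n) (h : 'rV[R]_n -> R)
    (S : set 'rV[R]_n) (j : nat) :
  Ck j f -> Ck j g -> Ck j h ->
  open S ->
  (2 <= j)%N -> (j <= n)%N ->
  open_map_on (Hmap f h j) S ->
  PropertyB f h S j.
Proof.
move=> Ckf _ Ckh oS _ _ oH xa xb Sxa Sxb _ Hab.
have Ck_iter k : (k < j)%N -> Ck (j - k) (lieN f h k).
  by move=> kj; apply: Ck_lieN => //; exact: ltnW.
have Ck1 k : (k < j.-1)%N -> Ck 1 (lieN f h k).
  move=> kj; have kj' : (k < j)%N by rewrite (leq_trans kj) // leq_pred.
  by apply: Ck_le (Ck_iter k kj'); rewrite subn_gt0 (leq_trans kj) // leq_pred.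
have cH : continuous (Hmap f h j).
  move=> x; apply: continuous_mx_entries => i k.
  have -> : (fun y => Hmap f h j y i k) = lieN f h k by apply: funext => y; rewrite mxE.
  by have := Ck_le (leq0n (j - k)) (Ck_iter k (ltn_ord k)); exact.
have dense x0 e : S x0 -> 0 < e ->
    exists2 x, S x /\ `|x - x0| < e & \rank (jacH f h j.-1 x) = j.-1.
  by move=> Sx0 e0; exact: dense_full_rank (leq_pred j) Ck1 oS oH Sx0 e0.
have /choice[xy xyP] k : exists xy : 'rV[R]_n * 'rV[R]_n,
    [/\ S xy.1 /\ S xy.2, `|xy.1 - xa| < harmonic k, `|xy.2 - xb| < harmonic k,
        Hmap f h j xy.1 = Hmap f h j xy.2 & \rank (jacH f h j.-1 xy.1) = j.-1].
  have [x [y ?]] := open_map_pair_approx oS oH (cH xa) dense Sxa Sxb Hab (harmonic_gt0 k).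
  by exists (x, y).
exists (fun k => (xy k).1), (fun k => (xy k).2); split; [|split].
- by move=> k; case: (xyP k).
- have xa_lim : (fun k => (xy k).1) @ \oo --> xa.
    by apply: cvg_dist_harmonic => k; case: (xyP k).
  have xb_lim : (fun k => (xy k).2) @ \oo --> xb.
    by apply: cvg_dist_harmonic => k; case: (xyP k).
  exact: cvg_pair xa_lim xb_lim.
- by move=> k; case: (xyP k) => _ _ _ -> ->; split => //; left.
Qed.
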